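(* Let $G$ be an SE-graph, $\phi$ an $(I|J)$-flow and $\phi'$ an $(I'|J')$-flow in $G$, and let $P_1,\dots,P_k$ be the exchange paths of the double flow $(\phi,\phi')$. Then: (i) $k=(|I^\circ|+|I^\bullet|+|J^\circ|+|J^\bullet|)/2$; (ii) the set of endvertices of $P_1,\dots,P_k$ is $\{r_i:i\in I^\circ\cup I^\bullet\}\cup\{c_j:j\in J^\circ\cup J^\bullet\}$, and each $P_i$ connects either a vertex of $\{r_i:i\in I^\circ\}$ with one of $\{r_i:i\in I^\bullet\}$, or a vertex of $\{c_j:j\in J^\circ\}$ with one of $\{c_j:j\in J^\bullet\}$, or a vertex of $\{r_i:i\in I^\circ\}$ with one of $\{c_j:j\in J^\circ\}$, or a vertex of $\{r_i:i\in I^\bullet\}$ with one of $\{c_j:j\in J^\bullet\}$; (iii) in each path $P_i$, traversed from one end to the other, the edges of $\phi$ and the edges of $\phi'$ have opposite directions (say, all edges of $\phi$ on $P_i$ are traversed forward and all edges of $\phi'$ backward).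
   Context: Notation: $[p]=\{1,\dots,p\}$; $\mathcal E^{m,n}$ is the set of pairs $(I|J)$, $I\subseteq[m]$, $J\subseteq[n]$, $|I|=|J|$. An SE-graph is a finite directed graph $G=(V,E)$ embedded in the plane (planar with a fixed layout) such that: every edge is either horizontal (H-edge) directed to the right or vertical (V-edge) directed downward; there are distinguished sources $r_1,\dots,r_m$ on a vertical line in this order upward and sinks $c_1,\dots,c_n$ on a horizontal line in this order from left to right; sources are incident only with H-edges, sinks only with V-edges; every vertex lies on a directed path from a source to a sink. For $(I|J)\in\mathcal E^{m,n}$, an $(I|J)$-flow is a set of pairwise vertex-disjoint directed paths from $\{r_i:i\in I\}$ to $\{c_j:j\in J\}$. For $(I|J),(I'|J')\in\mathcal E^{m,n}$ put $I^\circ=I\setminus I'$, $I^\bullet=I'\setminus I$, $J^\circ=J\setminus J'$, $J^\bullet=J'\setminus J$. Given an $(I|J)$-flow $\phi$ and an $(I'|J')$-flow $\phi'$ (a double flow), let $E_\phi,E_{\phi'}$ be their edge sets and $U=E_\phi\triangle E_{\phi'}$. In the subgraph $\langle U\rangle$ formed by the edges of $U$, every vertex has degree 1, 2 or 4. Split each vertex $v$ of degree 4 into two nearby vertices $v',v''$ so that the edges of $U$ entering $v$ now enter $v'$ and those leaving $v$ now leave $v''$; the resulting planar graph $\langle U\rangle'$ has all degrees at most 2, so it is a disjoint union of (undirected) simple paths $P'_1,\dots,P'_k$ and simple cycles. The images $P_1,\dots,P_k$ of $P'_1,\dots,P'_k$ in $G$ are called the exchange paths of $(\phi,\phi')$.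 *)

From HB Require Import structures.
From mathcomp Require Import all_boot all_order all_algebra.
Set Implicit Arguments. Unset Strict Implicit. Unset Printing Implicit Defensive.
Import Order.TTheory GRing.Theory Num.Theory.
Local Open Scope ring_scope.

(* Raw data of a finite directed graph with a straight-line layout in the
   plane R^2 (coordinates px, py), sources r_1..r_m and sinks c_1..c_n. *)
Record sedata (R : realFieldType) (m n : nat) := SEData {
  vert : finType;
  edge : finType;
  tail : edge -> vert;
  head : edge -> vert;
  px : vert -> R;
  py : vert -> R;
  src : 'I_m -> vert;
  snk : 'I_n -> vert
}.

Section Defs.
Variables (R : realFieldType) (m n : nat) (G : sedata R m n).
Local Notation V := (vert G).
Local Notation E := (edge G).

Definition isH (e : E) : Prop :=
  py (tail e) = py (head e) /\ px (tail e) < px (head e).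
Definition isV (e : E) : Prop :=
  px (tail e) = px (head e) /\ py (head e) < py (tail e).

(* the point (a,b) lies on the (closed, axis-parallel) segment drawing e *)
Definition on_edge (e : E) (a b : R) : Prop :=
  Num.min (px (tail e)) (px (head e)) <= a <= Num.max (px (tail e)) (px (head e))
  /\ Num.min (py (tail e)) (py (head e)) <= b <= Num.max (py (tail e)) (py (head e)).

Fixpoint dwalk (u : V) (s : seq E) (w : V) : Prop :=
  match s with
  | [::] => u = w
  | e :: s' => tail e = u /\ dwalk (head e) s' w
  end.

Definition walk_verts (u : V) (s : seq E) : seq V := u :: map (@head _ _ _ G) s.

Definition is_SEgraph : Prop :=
      (forall e : E, isH e \/ isV e) /\
      (forall u v : V, px u = px v -> py u = py v -> u = v) /\
      (forall (e f : E) (a b : R), e <> f -> on_edge e a b -> on_edge f a b ->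
        exists v : V, (v = tail e \/ v = head e) /\ (v = tail f \/ v = head f)
                      /\ px v = a /\ py v = b) /\
      (forall (v : V) (e : E), on_edge e (px v) (py v) -> v = tail e \/ v = head e) /\
      (forall i j : 'I_m, px (src G i) = px (src G j)) /\
      (forall i j : 'I_m, (i < j)%N -> py (src G i) < py (src G j)) /\
      (forall i j : 'I_n, py (snk G i) = py (snk G j)) /\
      (forall i j : 'I_n, (i < j)%N -> px (snk G i) < px (snk G j)) /\
      (forall (i : 'I_m) (j : 'I_n), src G i <> snk G j) /\
      (forall (e : E) (i : 'I_m), tail e = src G i \/ head e = src G i -> isH e) /\
      (forall (e : E) (j : 'I_n), tail e = snk G j \/ head e = snk G j -> isV e) /\
      (forall v : V, exists (i : 'I_m) (j : 'I_n) (s : seq E),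
        dwalk (src G i) s (snk G j) /\ v \in walk_verts (src G i) s).

(* An (I|J)-flow, given by a path p i from r_i to c_(t i) for each i in I;
   the paths are pairwise vertex-disjoint and their ends are exactly
   {r_i : i in I} and {c_j : j in J}. *)
Definition is_flow (I : {set 'I_m}) (J : {set 'I_n})
    (p : 'I_m -> seq E) (t : 'I_m -> 'I_n) : Prop :=
  [/\ #|I| = #|J|,
      forall i, i \in I -> dwalk (src G i) (p i) (snk G (t i)),
      forall i i', i \in I -> i' \in I -> i <> i' -> forall v : V,
        v \in walk_verts (src G i) (p i) -> v \notin walk_verts (src G i') (p i') &
      [set t i | i in I] = J].

Definition flow_edges (I : {set 'I_m}) (p : 'I_m -> seq E) : {set E} :=
  \bigcup_(i in I) [set e in p i].

Definition symdiff (A B : {set E}) : {set E} := (A :\: B) :|: (B :\: A).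

(* The split graph <U>' : nodes are pairs (v,b); a vertex v of degree 4 in
   <U> is split into (v,false) (receiving the entering edges, v') and
   (v,true) (emitting the leaving edges, v''); other vertices v are (v,false). *)
Definition degU (U : {set E}) (v : V) : nat :=
  #|[set e in U | tail e == v]| + #|[set e in U | head e == v]|.

Definition node (U : {set E}) (v : V) (b : bool) : V * bool :=
  if degU U v == 4%N then (v, b) else (v, false).

Definition ends (U : {set E}) (e : E) : (V * bool) * (V * bool) :=
  (node U (tail e) true, node U (head e) false).

Definition ndeg (U : {set E}) (x : V * bool) : nat :=
  #|[set e in U | (ends U e).1 == x]| + #|[set e in U | (ends U e).2 == x]|.

(* undirected walk in <U>' from x to y; each step (e,d) uses edge e of U,
   traversed forward (tail to head) if d = true, backward if d = false. *)
Fixpoint uwalk (U : {set E}) (x : V * bool) (s : seq (E * bool)) (y : V * bool)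
    : Prop :=
  match s with
  | [::] => x = y
  | (e, d) :: s' =>
      [/\ e \in U,
          (if d then (ends U e).1 else (ends U e).2) = x &
          uwalk U (if d then (ends U e).2 else (ends U e).1) s' y]
  end.

(* a traversal, from one end to the other, of a path component of <U>' *)
Definition exch_trav (U : {set E}) (x : V * bool) (s : seq (E * bool))
    (y : V * bool) : Prop :=
  [/\ uwalk U x s y, s != [::], uniq (map fst s), ndeg U x = 1%N & ndeg U y = 1%N].

(* an exchange path, identified with its (nonempty) edge set *)
Definition exch_path (U : {set E}) (P : {set E}) : Prop :=
  exists x s y, exch_trav U x s y /\ P = [set e in map fst s].

Definition Rset (K : {set 'I_m}) : {set V} := [set src G i | i in K].
Definition Cset (K : {set 'I_n}) : {set V} := [set snk G j | j in K].

Definition connects (a b : V) (A B : {set V}) : Prop :=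
  (a \in A /\ b \in B) \/ (a \in B /\ b \in A).

End Defs.

From Pilot Require Import Defs.
From HB Require Import structures.
From mathcomp Require Import all_boot all_order all_algebra.
From mathcomp Require Import zify.
From Stdlib Require Import ClassicalEpsilon.
Import Order.TTheory GRing.Theory Num.Theory.
Set Implicit Arguments. Unset Strict Implicit. Unset Printing Implicit Defensive.

(* Each flow has at most one edge entering and one edge leaving a vertex, so every vertex
   has in- and out-degree at most 2 in U = E_phi (+) E_phi', and the two degrees have the
   same parity except at the terminals r_i (i in I° u I•) and c_j (j in J° u J•), whose
   degree is odd.  After splitting the vertices of degree 4, every node of <U>' has degree at
   most 2 and the nodes of degree 1 are exactly the copies of these terminals.  Each exchange
   path has two ends of degree 1 and each such node ends exactly one path, which gives (i)
   and the set of endvertices.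
   Two consecutive edges of an exchange path either share their head or their tail, and then
   they belong to different flows, or they meet head to tail at an unsplit vertex v, and then
   they belong to the same flow: a phi-edge entering v followed by a phi'-edge leaving v
   would, by flow conservation at v, give v two entering and two leaving edges in U.  Hence
   "traversed forward iff it is a phi-edge" is constant along a path, which is (iii); on the
   first and on the last edge it is dictated by the kind of terminal, which leaves only the
   four kinds of connections of (ii). *)

Lemma exists_enum_pred (T : finType) (Q : T -> Prop) :
  exists s : seq T, uniq s /\ forall x, x \in s <-> Q x.
Proof.
exists [seq x <- enum T | if excluded_middle_informative (Q x) then true else false].
split=> [|x]; first by rewrite filter_uniq ?enum_uniq.
by rewrite mem_filter mem_enum andbT; case: excluded_middle_informative.
Qed.

Section Graph.
Variables (R : realFieldType) (m n : nat) (G : sedata R m n).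
Local Notation V := (vert G).
Local Notation E := (edge G).
Local Notation hd := (@Defs.head R m n G).
Implicit Types (u v w : V) (e f g : E).

Definition in_edges (F : {set E}) (v : V) : {set E} := [set e in F | hd e == v].
Definition out_edges (F : {set E}) (v : V) : {set E} := [set e in F | tail e == v].

Section DirectedWalks.
Implicit Type s : seq E.
Local Open Scope ring_scope.

Lemma dwalk_mono (f : V -> R) u s w v :
  (forall e, f (tail e) <= f (hd e)) -> dwalk u s w -> v \in walk_verts u s ->
  f u <= f v <= f w.
Proof.
move=> f_mono; elim: s u v => [|e s IHs] u v /=.
  by move=> <-; rewrite inE => /eqP ->; rewrite lexx.
move=> [<- walk_s]; rewrite inE => /predU1P [->|v_s].
  by rewrite lexx /=; have /andP [_] := IHs _ _ walk_s (mem_head _ _); apply: le_trans.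
by have /andP [le_ev ->] := IHs _ _ walk_s v_s; rewrite andbT (le_trans (f_mono e)).
Qed.

Lemma mem_walk_head u s e : e \in s -> hd e \in walk_verts u s.
Proof. by move=> e_s; rewrite inE map_f ?orbT. Qed.

Lemma mem_walk_tail u s w e : dwalk u s w -> e \in s -> tail e \in walk_verts u s.
Proof.
elim: s u => [|f s IHs] u //= [<- walk_s]; rewrite inE => /predU1P [->|e_s].
  exact: mem_head.
by rewrite inE (IHs _ walk_s e_s) orbT.
Qed.

Lemma dwalk_head_next u s w e : dwalk u s w -> e \in s ->
  hd e = w \/ exists2 f, f \in s & tail f = hd e.
Proof.
elim: s u => [|g s IHs] u //= [_ walk_s]; rewrite inE => /predU1P [->|e_s].
  case: s walk_s {IHs} => [|f s] /= walk_s; first by left.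
  by right; exists f; [rewrite !inE eqxx orbT | case: walk_s].
case: (IHs _ walk_s e_s) => [|[f f_s tail_f]]; first by left.
by right; exists f; rewrite // inE f_s orbT.
Qed.

Lemma dwalk_first u s w : dwalk u s w -> u <> w -> exists2 e, e \in s & tail e = u.
Proof. by case: s => [|e s] //= [tail_e _] _; exists e; rewrite ?mem_head. Qed.

Lemma dwalk_last u s w : dwalk u s w -> u <> w -> exists2 e, e \in s & hd e = w.
Proof.
elim: s u => [|f s IHs] u //= [_ walk_s] ne_uw.
have [<-|ne_fw] := eqVneq (hd f) w; first by exists f; rewrite ?mem_head.
by have [e e_s <-] := IHs _ walk_s (elimN eqP ne_fw); exists e; rewrite // inE e_s orbT.
Qed.

End DirectedWalks.

Lemma mem_symdiff (A B : {set E}) e : (e \in symdiff A B) = (e \in A) (+) (e \in B).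
Proof. by rewrite !inE; case: (e \in A); case: (e \in B). Qed.

Lemma symdiffC (A B : {set E}) : symdiff A B = symdiff B A.
Proof. by apply/setP => e; rewrite !mem_symdiff addbC. Qed.

Lemma in_edges_symdiff (A B : {set E}) v :
  in_edges (symdiff A B) v = symdiff (in_edges A v) (in_edges B v).
Proof. by apply/setP => e; rewrite !inE; case: (e \in A); case: (e \in B); case: (hd e == v). Qed.

Lemma out_edges_symdiff (A B : {set E}) v :
  out_edges (symdiff A B) v = symdiff (out_edges A v) (out_edges B v).
Proof. by apply/setP => e; rewrite !inE; case: (e \in A); case: (e \in B); case: (tail e == v). Qed.

Lemma card_symdiff (A B : {set E}) : #|symdiff A B| + 2 * #|A :&: B| = #|A| + #|B|.
Proof.
have disjD : (A :\: B) :&: (B :\: A) = set0.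
  by apply/setP => e; rewrite !inE; case: (e \in A); case: (e \in B).
have := cardsU (A :\: B) (B :\: A); rewrite disjD cards0 subn0 => ->.
rewrite !cardsD [B :&: A]setIC; have := subset_leq_card (subsetIl A B).
have := subset_leq_card (subsetIr A B); lia.
Qed.

Lemma odd_card_symdiff (A B : {set E}) : odd #|symdiff A B| = odd #|A| (+) odd #|B|.
Proof. by rewrite -oddD -card_symdiff oddD mul2n odd_double addbF. Qed.

Lemma leq_card_symdiff (A B : {set E}) : #|symdiff A B| <= #|A| + #|B|.
Proof. by rewrite -card_symdiff leq_addr. Qed.

Lemma vertex_cases v :
  [\/ exists i, v = src G i, exists j, v = snk G j
    | (forall i, v <> src G i) /\ (forall j, v <> snk G j)].
Proof.
case: (pickP (fun i => v == src G i)) => [i /eqP ->|no_src]; first by constructor 1; exists i.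
case: (pickP (fun j => v == snk G j)) => [j /eqP ->|no_snk]; first by constructor 2; exists j.
by constructor 3; split => [i|j] /eqP; rewrite ?no_src ?no_snk.
Qed.

Lemma node_fst F v b : (node F v b).1 = v.
Proof. by rewrite /node; case: ifP. Qed.

Lemma node_inj F u v b c : node F u b = node F v c -> u = v.
Proof. by move=> /(congr1 fst); rewrite !node_fst. Qed.

Lemma node_true_false F u v : node F u true = node F v false -> u = v /\ degU F u != 4.
Proof. by rewrite /node; case: ifP => deg_u; case: ifP => deg_v; case=> ->; rewrite ?deg_u. Qed.

Lemma node_eq F w c v b :
  (node F w c == (v, b)) = (w == v) && (if c then b == (degU F v == 4) else ~~ b).
Proof.
rewrite /node; have [<-|ne_wv] := eqVneq w v;
  by case: (degU F w == 4); rewrite xpair_eqE ?eqxx ?(negbTE ne_wv) //; case: b; case: c.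
Qed.

Lemma ndegE F v b : ndeg F (v, b) =
  (b == (degU F v == 4)) * #|out_edges F v| + (~~ b) * #|in_edges F v|.
Proof.
rewrite /ndeg /ends /=; congr (_ + _).
  have -> : [set e in F | node F (tail e) true == (v, b)] =
            if b == (degU F v == 4) then out_edges F v else set0.
    by apply/setP => e; rewrite [in LHS]inE node_eq; case: (b == _); rewrite !inE ?andbT ?andbF.
  by case: (b == _); rewrite ?cards0 ?mul1n.
have -> : [set e in F | node F (hd e) false == (v, b)] = if b then set0 else in_edges F v.
  by apply/setP => e; rewrite [in LHS]inE node_eq; case: b; rewrite !inE ?andbT ?andbF.
by case: b; rewrite ?cards0 ?mul1n.
Qed.

Lemma ndeg_le2_eq1 F v b : #|in_edges F v| <= 2 -> #|out_edges F v| <= 2 ->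
  [|| #|in_edges F v| == 0, #|out_edges F v| == 0 | odd #|in_edges F v| == odd #|out_edges F v|] ->
  ndeg F (v, b) <= 2 /\ (ndeg F (v, b) == 1) = ~~ b && odd (#|in_edges F v| + #|out_edges F v|).
Proof.
rewrite ndegE /degU -/(out_edges F v) -/(in_edges F v).
by case: #|in_edges F v| => [|[|[|]]] //; case: #|out_edges F v| => [|[|[|]]] //; case: b.
Qed.

Section SplitGraph.
Variable U : {set E}.
Local Notation N := (V * bool)%type.
Implicit Types (x y z : N) (s : seq (E * bool)) (ed : E * bool) (P : {set E}).

Definition step_src ed : N := if ed.2 then (ends U ed.1).1 else (ends U ed.1).2.
Definition step_dst ed : N := if ed.2 then (ends U ed.1).2 else (ends U ed.1).1.

Definition incid x e : nat := ((ends U e).1 == x) + ((ends U e).2 == x).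
Definition walk_incid x s : nat := \sum_(ed <- s) incid x ed.1.
Definition touches P x : bool := [exists e in P, 0 < incid x e].
Definition exch_ends P : {set N} := [set x | (ndeg U x == 1) && touches P x].

Definition rev_steps s : seq (E * bool) := rev [seq (ed.1, ~~ ed.2) | ed <- s].

Lemma uwalk_cons x ed s y :
  uwalk U x (ed :: s) y <-> [/\ ed.1 \in U, step_src ed = x & uwalk U (step_dst ed) s y].
Proof. by case: ed. Qed.

Lemma uwalk_rcons x s ed y : uwalk U x s y -> ed.1 \in U -> step_src ed = y ->
  uwalk U x (rcons s ed) (step_dst ed).
Proof.
elim: s x => [|ed' s IHs] x; first by move=> -> ed_U src_ed; apply/uwalk_cons.
by move=> /uwalk_cons [ed'_U src_ed' walk_s] ed_U src_ed; apply/uwalk_cons; split => //; apply: IHs.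
Qed.

Lemma uwalk_subset x s y : uwalk U x s y -> {subset map fst s <= U}.
Proof.
elim: s x => [|ed s IHs] x // /uwalk_cons [ed_U _ walk_s] e.
by rewrite inE => /predU1P [-> //|]; apply: IHs walk_s e.
Qed.

Lemma uwalk_rev x s y : uwalk U x s y -> uwalk U y (rev_steps s) x.
Proof.
elim: s x => [|ed s IHs] x; first by move=> ->.
move=> /uwalk_cons [ed_U <- walk_s]; rewrite /rev_steps map_cons rev_cons.
have -> : step_src ed = step_dst (ed.1, ~~ ed.2) by case: ed {walk_s ed_U} => e [].
by apply: uwalk_rcons (IHs _ walk_s) _ _ => //; case: ed {walk_s ed_U} => e [].
Qed.

Lemma incid_step_src ed : 0 < incid (step_src ed) ed.1.
Proof. by case: ed => e []; rewrite /incid /step_src /= eqxx ?addn_gt0 ?orbT. Qed.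

Lemma incid_step_dst ed : 0 < incid (step_dst ed) ed.1.
Proof. by case: ed => e []; rewrite /incid /step_dst /= eqxx ?addn_gt0 ?orbT. Qed.

Lemma ndeg_incid x : ndeg U x = \sum_(e in U) incid x e.
Proof.
rewrite /ndeg /incid big_split -!sum1dep_card !big_mkcondr /=.
by congr (_ + _); apply: eq_bigr => e _; case: eqP.
Qed.

Lemma odd_walk_incid x s y z : uwalk U x s y -> odd (walk_incid z s) = (x == z) (+) (y == z).
Proof.
elim: s x => [|ed s IHs] x; first by move=> ->; rewrite /walk_incid big_nil addbb.
move=> /uwalk_cons [_ <- walk_s]; rewrite /walk_incid big_cons oddD -/(walk_incid z s).
rewrite (IHs _ walk_s) /incid oddD !oddb.
by case: ed {walk_s} => e [] /=; case: (_ == z); case: (_ == z); case: (y == z).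
Qed.

Lemma walk_incid_gt0 z s : (0 < walk_incid z s) = has (fun e => 0 < incid z e) (map fst s).
Proof.
rewrite /walk_incid -(big_map fst xpredT (incid z)) lt0n sum_nat_seq_neq0.
by apply: eq_has => e; rewrite lt0n.
Qed.

Lemma ndeg_walk_split x s y z : uwalk U x s y -> uniq (map fst s) ->
  ndeg U z = walk_incid z s + \sum_(e in U | e \notin map fst s) incid z e.
Proof.
move=> walk_s uniq_s; rewrite ndeg_incid (bigID (mem (map fst s))) /=; congr (_ + _).
rewrite /walk_incid -(big_map fst xpredT (incid z)) big_uniq //; apply: eq_bigl => e.
by apply/andP/idP => [[]//|e_s]; split => //; apply: uwalk_subset walk_s _ e_s.
Qed.

Lemma leq_walk_incid x s y z : uwalk U x s y -> uniq (map fst s) -> walk_incid z s <= ndeg U z.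
Proof. by move=> walk_s uniq_s; rewrite (ndeg_walk_split z walk_s uniq_s) leq_addr. Qed.

Lemma walk_incid_ltn x s y z : uwalk U x s y -> uniq (map fst s) ->
  (walk_incid z s < ndeg U z) = [exists e in U, (e \notin map fst s) && (0 < incid z e)].
Proof.
move=> walk_s uniq_s; rewrite (ndeg_walk_split z walk_s uniq_s).
rewrite -{1}[walk_incid z s]addn0 ltn_add2l lt0n sum_nat_eq0 negb_forall.
by apply: eq_existsb => e; rewrite negb_imply lt0n andbA.
Qed.

Lemma exch_trav_neq x s y : exch_trav U x s y -> x != y.
Proof.
case=> + + + deg_x _; case: s => [|ed s] walk_s // _ uniq_s.
apply/eqP => eq_xy; move: walk_s uniq_s; rewrite -eq_xy => walk_s uniq_s.
have := odd_walk_incid x walk_s; rewrite eqxx addbb.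
have := leq_walk_incid x walk_s uniq_s; rewrite deg_x.
have /uwalk_cons [_ src_ed _] := walk_s.
have : 0 < walk_incid x (ed :: s) by rewrite walk_incid_gt0 /= -src_ed incid_step_src.
by case: (walk_incid x _) => [|[|]].
Qed.

Lemma size_uwalk_le x s y : uwalk U x s y -> uniq (map fst s) -> size s <= #|U|.
Proof.
move=> walk_s uniq_s; rewrite -(size_map fst) -(card_uniqP uniq_s).
by apply/subset_leq_card/subsetP; apply: uwalk_subset walk_s.
Qed.

Lemma uwalk_const (g : E * bool -> bool) x ed s y :
  (forall ed1 ed2, ed1.1 \in U -> ed2.1 \in U -> ed1.1 != ed2.1 ->
     step_dst ed1 = step_src ed2 -> g ed1 = g ed2) ->
  uwalk U x (ed :: s) y -> uniq (map fst (ed :: s)) -> forall ed', ed' \in ed :: s -> g ed' = g ed.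
Proof.
move=> g_step; elim: s x ed => [|ed1 s IHs] x ed walk_s uniq_s ed'.
  by rewrite inE => /eqP ->.
move: walk_s uniq_s => /uwalk_cons [ed_U _ walk_s] /= /andP [ed_s uniq_s].
have /uwalk_cons [ed1_U src_ed1 _] := walk_s.
have ne_ed : ed.1 != ed1.1 by apply: contraNneq ed_s => ->; rewrite mem_head.
rewrite inE => /predU1P [-> //|ed'_s].
by rewrite (IHs _ _ walk_s uniq_s ed' ed'_s) (g_step _ _ ed_U ed1_U ne_ed (esym src_ed1)).
Qed.

Lemma exch_trav_rev x s y : exch_trav U x s y -> exch_trav U y (rev_steps s) x.
Proof.
case=> walk_s s_nil uniq_s deg_x deg_y; split => //; first exact: uwalk_rev.
  by rewrite -size_eq0 size_rev size_map size_eq0.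
by rewrite /rev_steps map_rev rev_uniq -map_comp.
Qed.

Lemma touches_walk z s : touches [set e in map fst s] z = (0 < walk_incid z s).
Proof.
rewrite walk_incid_gt0; apply/exists_inP/hasP => -[e];
  by rewrite ?inE => e_s incid_e; exists e; rewrite ?inE.
Qed.

Lemma exch_ends_trav x s y : exch_trav U x s y -> exch_ends [set e in map fst s] = [set x; y].
Proof.
move=> trav; have ne_xy := exch_trav_neq trav; case: trav => walk_s _ uniq_s deg_x deg_y.
have pos_odd k : odd k -> 0 < k by case: k.
apply/setP => z; rewrite !inE touches_walk; have odd_z := odd_walk_incid z walk_s.
apply/andP/idP => [[/eqP deg_z pos_z]|/orP [|] /eqP ->].
- have := leq_walk_incid z walk_s uniq_s; rewrite deg_z ![z == _]eq_sym.
  by move: pos_z odd_z; case: (walk_incid z s) => [|[|]] //=; case: (x == z); case: (y == z).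
- rewrite deg_x; split => //; apply: pos_odd.
  by rewrite (odd_walk_incid x walk_s) eqxx eq_sym (negbTE ne_xy).
- rewrite deg_y; split => //; apply: pos_odd.
  by rewrite (odd_walk_incid y walk_s) eqxx (negbTE ne_xy).
Qed.

Lemma card_exch_ends P : exch_path U P -> #|exch_ends P| = 2.
Proof.
by case=> x [s [y [trav ->]]]; rewrite (exch_ends_trav trav) cards2 (exch_trav_neq trav).
Qed.

Section MaxDegreeTwo.
Hypothesis ndeg_le2 : forall z, ndeg U z <= 2.

Lemma walk_extend x s y : uwalk U x s y -> uniq (map fst s) -> ndeg U x = 1 ->
  ~~ ((s != [::]) && (ndeg U y == 1)) ->
  exists ed, [/\ ed.1 \in U, ed.1 \notin map fst s & step_src ed = y].
Proof.
move=> walk_s uniq_s deg_x not_trav.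
have : walk_incid y s < ndeg U y.
  case: s walk_s uniq_s not_trav => [<- _ _|ed s walk_s uniq_s /= deg_y].
    by rewrite deg_x /walk_incid big_nil.
  have ne_xy : x != y by apply: contraNneq deg_y => <-; rewrite deg_x.
  have := odd_walk_incid y walk_s; rewrite eqxx (negbTE ne_xy) /=.
  have := leq_walk_incid y walk_s uniq_s; have := ndeg_le2 y; move: deg_y.
  by case: (ndeg U y) => [|[|[|]]] //; case: (walk_incid y _) => [|[|[|]]].
rewrite (walk_incid_ltn y walk_s uniq_s) => /exists_inP [e e_U /andP [e_s incid_e]].
exists (e, (ends U e).1 == y); split => //; move: incid_e.
by rewrite /incid /step_src /=; case: eqP => [<- //|_]; case: eqP => [<- //|].
Qed.

(* A walk from [x] along unused edges can only get stuck at a node of degree one. *)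
Lemma exch_trav_exists x : ndeg U x = 1 -> exists s y, exch_trav U x s y.
Proof.
move=> deg_x.
suff walk_to_trav : forall k s y, uwalk U x s y -> uniq (map fst s) -> #|U| <= size s + k ->
    exists s' y', exch_trav U x s' y'.
  by apply: (walk_to_trav #|U| [::] x).
elim=> [|k IHk] s y walk_s uniq_s le_U;
  (have [|not_trav] := boolP ((s != [::]) && (ndeg U y == 1));
    first by case/andP => s_nil /eqP deg_y; exists s, y);
  have [ed [ed_U ed_s src_ed]] := walk_extend walk_s uniq_s deg_x not_trav;
  have walk_ed := uwalk_rcons walk_s ed_U src_ed;
  have uniq_ed : uniq (map fst (rcons s ed)) by rewrite map_rcons rcons_uniq ed_s.
  by have := size_uwalk_le walk_ed uniq_ed; rewrite size_rcons; lia.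
by apply: IHk walk_ed uniq_ed _; rewrite size_rcons; lia.
Qed.

Lemma exch_trav_saturated x s y z : exch_trav U x s y -> 0 < walk_incid z s ->
  ndeg U z <= walk_incid z s.
Proof.
case=> walk_s _ _ deg_x deg_y.
have [<-|ne_xz] := eqVneq x z; first by rewrite deg_x.
have [<-|ne_yz] := eqVneq y z; first by rewrite deg_y.
have := odd_walk_incid z walk_s; rewrite (negbTE ne_xz) (negbTE ne_yz) /=.
move=> even_z pos_z; apply: leq_trans (ndeg_le2 z) _.
by move: pos_z even_z; case: (walk_incid z s) => [|[|]].
Qed.

Lemma exch_trav_closed x s y z e f : exch_trav U x s y -> e \in map fst s -> f \in U ->
  0 < incid z e -> 0 < incid z f -> f \in map fst s.
Proof.
move=> trav e_s f_U incid_e incid_f; case: (trav) => walk_s _ uniq_s _ _.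
have pos_z : 0 < walk_incid z s by rewrite walk_incid_gt0; apply/hasP; exists e.
have := exch_trav_saturated trav pos_z; rewrite leqNgt (walk_incid_ltn z walk_s uniq_s).
by apply: contraNT => f_s; apply/exists_inP; exists f; rewrite // f_s.
Qed.

Lemma exch_trav_sub x s y x' s' y' e :
  exch_trav U x s y -> exch_trav U x' s' y' -> e \in map fst s -> e \in map fst s' ->
  {subset map fst s <= map fst s'}.
Proof.
move=> [walk_s _ uniq_s _ _] trav' e_s e_s'.
case: s walk_s uniq_s e_s => [//|ed0 s] walk_s uniq_s e_s.
have in_s'_step ed1 ed2 : ed1.1 \in U -> ed2.1 \in U -> ed1.1 != ed2.1 ->
    step_dst ed1 = step_src ed2 -> (ed1.1 \in map fst s') = (ed2.1 \in map fst s').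
  move=> ed1_U ed2_U _ junction; have incid1 := incid_step_dst ed1.
  have incid2 := incid_step_src ed2; rewrite junction in incid1.
  by apply/idP/idP => in_s';
    [apply: exch_trav_closed trav' in_s' ed2_U incid1 incid2
    |apply: exch_trav_closed trav' in_s' ed1_U incid2 incid1].
have in_s' : forall ed, ed \in ed0 :: s -> (ed.1 \in map fst s') = (ed0.1 \in map fst s').
  exact: uwalk_const (fun ed => ed.1 \in map fst s') _ _ _ _ in_s'_step walk_s uniq_s.
move: e_s e_s' => /mapP [ed' ed'_s ->] e_s' _ /mapP [ed ed_s ->].
by rewrite (in_s' ed ed_s) -(in_s' ed' ed'_s).
Qed.

Lemma exch_ends_exists z : ndeg U z = 1 -> exists2 P, exch_path U P & z \in exch_ends P.
Proof.
move=> /exch_trav_exists [s [y trav]]; exists [set e in map fst s]; first by exists z, s, y.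
by rewrite (exch_ends_trav trav) !inE eqxx.
Qed.

Lemma exch_path_unique P P' z : exch_path U P -> exch_path U P' ->
  z \in exch_ends P -> z \in exch_ends P' -> P = P'.
Proof.
case=> x [s [y [trav ->]]] [x' [s' [y' [trav' ->]]]].
rewrite !inE => /andP [_ /exists_inP [e e_s incid_e]] /andP [_ /exists_inP [e' e_s' incid_e']].
rewrite !inE in e_s e_s'.
have e_U : e \in U by case: trav => walk_s _ _ _ _; apply: uwalk_subset walk_s _ e_s.
have {}e_s' := exch_trav_closed trav' e_s' e_U incid_e' incid_e.
apply/setP => f; rewrite !inE; apply/idP/idP.
  exact: exch_trav_sub trav trav' e_s e_s' f.
exact: exch_trav_sub trav' trav e_s' e_s f.
Qed.

(* Double counting of the pairs (path, end of degree one). *)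
Lemma count_exch_paths Ps : uniq Ps -> (forall P, P \in Ps <-> exch_path U P) ->
  2 * size Ps = #|[set z | ndeg U z == 1]|.
Proof.
move=> uniq_Ps mem_Ps.
transitivity (\sum_(P <- Ps) #|exch_ends P|).
  rewrite (eq_big_seq (fun=> 2)) => [|P /mem_Ps /card_exch_ends //].
  by rewrite big_const_seq iter_addn_0 count_predT mulnC.
rewrite -sum1dep_card (eq_bigr (fun P => \sum_(z in exch_ends P) 1)) => [|P _]; last first.
  by rewrite sum1_card.
rewrite (exchange_big_dep (fun z => ndeg U z == 1)) /= => [|P z _]; last first.
  by rewrite inE => /andP [].
apply: eq_bigr => z /eqP /exch_ends_exists [P0 path_P0 z_P0]; rewrite sum1_count.
have P0_Ps : P0 \in Ps by apply/mem_Ps.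
rewrite (@eq_in_count _ _ (pred1 P0)) ?count_uniq_mem ?P0_Ps // => P /mem_Ps path_P /=.
by apply/idP/eqP => [z_P|->]; first exact: exch_path_unique path_P path_P0 z_P z_P0.
Qed.

End MaxDegreeTwo.
End SplitGraph.

Definition aligned (A : {set E}) (ed : E * bool) : bool := ed.2 == (ed.1 \in A).

Lemma aligned_flip A ed : aligned A (ed.1, ~~ ed.2) = ~~ aligned A ed.
Proof. by case: ed => e []; rewrite /aligned /=; case: (e \in A). Qed.

Lemma connects_opposite a b (R1 R2 C1 C2 : {set V}) :
  a \in (R1 :|: R2) :|: (C1 :|: C2) -> b \in (R1 :|: R2) :|: (C1 :|: C2) ->
  (a \in R1 :|: C2) = ~~ (b \in R1 :|: C2) ->
  [\/ connects a b R1 R2, connects a b C1 C2, connects a b R1 C1 | connects a b R2 C2].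
Proof.
rewrite /connects !inE.
case: (a \in R1); case: (a \in R2); case: (a \in C1); case: (a \in C2);
case: (b \in R1); case: (b \in R2); case: (b \in C1); case: (b \in C2) => //= _ _ _.
all: by [constructor 1; intuition | constructor 2; intuition
        | constructor 3; intuition | constructor 4; intuition].
Qed.

Definition terminals (I I' : {set 'I_m}) (J J' : {set 'I_n}) : {set V} :=
  Rset G ((I :\: I') :|: (I' :\: I)) :|: Cset G ((J :\: J') :|: (J' :\: J)).

Definition forward_terminals (I I' : {set 'I_m}) (J J' : {set 'I_n}) : {set V} :=
  Rset G (I :\: I') :|: Cset G (J' :\: J).

Section SEGraph.
Hypothesis HG : is_SEgraph G.

Section Geometry.
Local Open Scope ring_scope.
Implicit Type s : seq E.

(* H-edges go right and V-edges go down, so [pot] strictly increases along every edge. *)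
Definition pot v : R := px v - py v.

Lemma px_le_edge e : px (tail e) <= px (hd e).
Proof. by case: HG => edge_HV _; case: (edge_HV e) => [[_ /ltW]|[->]]. Qed.

Lemma py_ge_edge e : py (hd e) <= py (tail e).
Proof. by case: HG => edge_HV _; case: (edge_HV e) => [[->]|[_ /ltW]]. Qed.

Lemma pot_lt_edge e : pot (tail e) < pot (hd e).
Proof.
case: HG => edge_HV _; rewrite /pot.
by case: (edge_HV e) => [[-> lt_x]|[-> lt_y]]; rewrite ?ltrD2r ?ltrD2l ?ltrN2.
Qed.

Lemma pot_le_tail u s w e : dwalk u s w -> e \in s -> pot u <= pot (tail e).
Proof.
move=> walk_s e_s; have pot_mono f : pot (tail f) <= pot (hd f) by apply/ltW/pot_lt_edge.
by case/andP: (dwalk_mono pot_mono walk_s (mem_walk_tail walk_s e_s)).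
Qed.

Lemma dwalk_head_inj u s w : dwalk u s w -> {in s &, injective hd}.
Proof.
elim: s u => [|g s IHs] u //= [_ walk_s].
have lt_head f : f \in s -> pot (hd g) < pot (hd f).
  by move=> f_s; apply: le_lt_trans (pot_le_tail walk_s f_s) (pot_lt_edge f).
move=> e f; rewrite !inE => /predU1P [->|e_s] /predU1P [->|f_s] // eq_ef.
- by have := lt_head f f_s; rewrite eq_ef ltxx.
- by have := lt_head e e_s; rewrite eq_ef ltxx.
- exact: IHs walk_s e f e_s f_s eq_ef.
Qed.

Lemma dwalk_tail_inj u s w : dwalk u s w -> {in s &, injective (@tail _ _ _ G)}.
Proof.
elim: s u => [|g s IHs] u //= [_ walk_s].
have lt_tail f : f \in s -> pot (tail g) < pot (tail f).
  by move=> f_s; apply: lt_le_trans (pot_lt_edge g) (pot_le_tail walk_s f_s).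
move=> e f; rewrite !inE => /predU1P [->|e_s] /predU1P [->|f_s] // eq_ef.
- by have := lt_tail f f_s; rewrite eq_ef ltxx.
- by have := lt_tail e e_s; rewrite eq_ef ltxx.
- exact: IHs walk_s e f e_s f_s eq_ef.
Qed.

Lemma src_inj : injective (src G).
Proof.
case: HG => _ [_ [_ [_ [_ [src_y _]]]]] i j eq_ij.
by case: (ltngtP i j) => [/src_y|/src_y|/val_inj //]; rewrite eq_ij ltxx.
Qed.

Lemma snk_inj : injective (snk G).
Proof.
case: HG => _ [_ [_ [_ [_ [_ [_ [snk_x _]]]]]]] i j eq_ij.
by case: (ltngtP i j) => [/snk_x|/snk_x|/val_inj //]; rewrite eq_ij ltxx.
Qed.

Lemma src_neq_snk i j : src G i <> snk G j.
Proof. by case: HG => _ [_ [_ [_ [_ [_ [_ [_ [src_snk _]]]]]]]]. Qed.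

Lemma head_neq_src e i : hd e <> src G i.
Proof.
case: HG => _ [_ [_ [_ [src_x [_ [_ [_ [_ [src_H [_ on_path]]]]]]]]]] head_e.
have [_ lt_x] := src_H e i (or_intror head_e).
have [i' [j [s [walk_s tail_s]]]] := on_path (tail e).
have /andP [le_x _] := dwalk_mono px_le_edge walk_s tail_s.
by move: lt_x; rewrite head_e -(src_x i' i) ltNge le_x.
Qed.

Lemma tail_neq_snk e j : tail e <> snk G j.
Proof.
case: HG => _ [_ [_ [_ [_ [_ [snk_y [_ [_ [_ [snk_V on_path]]]]]]]]]] tail_e.
have [_ lt_y] := snk_V e j (or_introl tail_e).
have [i [j' [s [walk_s head_s]]]] := on_path (hd e).
have neg_py_mono f : - py (tail f) <= - py (hd f) by rewrite lerN2 py_ge_edge.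
have /andP [_] := dwalk_mono (f := fun v => - py v) neg_py_mono walk_s head_s.
rewrite lerN2 => le_y.
by move: lt_y; rewrite tail_e (snk_y j j') ltNge le_y.
Qed.

End Geometry.

Lemma mem_Rset K i : (src G i \in Rset G K) = (i \in K).
Proof. exact/mem_imset/src_inj. Qed.

Lemma mem_Cset K j : (snk G j \in Cset G K) = (j \in K).
Proof. exact/mem_imset/snk_inj. Qed.

Lemma src_notin_Cset K i : src G i \notin Cset G K.
Proof. by apply/imsetP => -[j _ /src_neq_snk]. Qed.

Lemma snk_notin_Rset K j : snk G j \notin Rset G K.
Proof. by apply/imsetP => -[i _ /esym /src_neq_snk]. Qed.

Lemma card_terminals I I' J J' :
  #|terminals I I' J J'| = #|I :\: I'| + #|I' :\: I| + #|J :\: J'| + #|J' :\: J|.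
Proof.
have cardsU_disj (T : finType) (A B : {set T}) : A :&: B = set0 -> #|A :|: B| = #|A| + #|B|.
  by move=> disj_AB; rewrite cardsU disj_AB cards0 subn0.
have disjD (T : finType) (A B : {set T}) : (A :\: B) :&: (B :\: A) = set0.
  by apply/setP => k; rewrite !inE; case: (k \in A); case: (k \in B).
rewrite cardsU_disj; last first.
  by apply/setP => v; rewrite !inE; apply/andP => -[/imsetP [i _ ->]]; apply/negP/src_notin_Cset.
rewrite /Rset /Cset !card_imset; [|exact: snk_inj|exact: src_inj].
by rewrite !cardsU_disj ?disjD // !addnA.
Qed.

Lemma card_in_edges_src F i : #|in_edges F (src G i)| = 0.
Proof.
apply/eqP; rewrite cards_eq0 -subset0; apply/subsetP => e.
by rewrite inE => /andP [_ /eqP /head_neq_src].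
Qed.

Lemma card_out_edges_snk F j : #|out_edges F (snk G j)| = 0.
Proof.
apply/eqP; rewrite cards_eq0 -subset0; apply/subsetP => e.
by rewrite inE => /andP [_ /eqP /tail_neq_snk].
Qed.

Lemma src_terminal I I' J J' i : (src G i \in terminals I I' J J') = (i \in I) (+) (i \in I').
Proof.
rewrite inE mem_Rset (negbTE (src_notin_Cset _ _)) orbF !inE.
by case: (i \in I); case: (i \in I').
Qed.

Lemma snk_terminal I I' J J' j : (snk G j \in terminals I I' J J') = (j \in J) (+) (j \in J').
Proof.
rewrite inE mem_Cset (negbTE (snk_notin_Rset _ _)) !inE.
by case: (j \in J); case: (j \in J').
Qed.

Lemma src_forward I I' J J' i : (src G i \in forward_terminals I I' J J') = (i \in I :\: I').
Proof. by rewrite inE mem_Rset (negbTE (src_notin_Cset _ _)) orbF. Qed.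

Lemma snk_forward I I' J J' j : (snk G j \in forward_terminals I I' J J') = (j \in J' :\: J).
Proof. by rewrite inE mem_Cset (negbTE (snk_notin_Rset _ _)). Qed.

Section Flow.
Variables (I : {set 'I_m}) (J : {set 'I_n}) (p : 'I_m -> seq E) (t : 'I_m -> 'I_n).
Hypothesis HF : is_flow I J p t.
Local Notation F := (flow_edges I p).

Lemma flow_edgesP e : reflect (exists2 i, i \in I & e \in p i) (e \in F).
Proof. by apply: (iffP bigcupP) => -[i i_I]; rewrite ?inE => e_p; exists i; rewrite ?inE. Qed.

Lemma flow_head_inj : {in F &, injective hd}.
Proof.
case: HF => _ walk_p disj_p _ e f /flow_edgesP [i i_I e_p] /flow_edgesP [i' i'_I f_p] eq_ef.
have [eq_i|/eqP ne_i] := eqVneq i i'.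
  by move: f_p; rewrite -eq_i => f_p; apply: dwalk_head_inj (walk_p i i_I) e f e_p f_p eq_ef.
have := disj_p i i' i_I i'_I ne_i _ (mem_walk_head _ e_p).
by rewrite eq_ef (mem_walk_head _ f_p).
Qed.

Lemma flow_tail_inj : {in F &, injective (@tail _ _ _ G)}.
Proof.
case: HF => _ walk_p disj_p _ e f /flow_edgesP [i i_I e_p] /flow_edgesP [i' i'_I f_p] eq_ef.
have [eq_i|/eqP ne_i] := eqVneq i i'.
  by move: f_p; rewrite -eq_i => f_p; apply: dwalk_tail_inj (walk_p i i_I) e f e_p f_p eq_ef.
have := disj_p i i' i_I i'_I ne_i _ (mem_walk_tail (walk_p i i_I) e_p).
by rewrite eq_ef (mem_walk_tail (walk_p i' i'_I) f_p).
Qed.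

Lemma card_in_edges_le1 v : #|in_edges F v| <= 1.
Proof.
apply/card_le1_eqP => e f; rewrite !inE => /andP [e_F /eqP head_e] /andP [f_F /eqP head_f].
by apply: flow_head_inj; rewrite // head_e head_f.
Qed.

Lemma card_out_edges_le1 v : #|out_edges F v| <= 1.
Proof.
apply/card_le1_eqP => e f; rewrite !inE => /andP [e_F /eqP tail_e] /andP [f_F /eqP tail_f].
by apply: flow_tail_inj; rewrite // tail_e tail_f.
Qed.

Lemma card_out_edges_src i : #|out_edges F (src G i)| = (i \in I).
Proof.
case: HF => _ walk_p _ _; have [i_I|i_notI] := boolP (i \in I).
  have [e e_p tail_e] := dwalk_first (walk_p i i_I) (@src_neq_snk _ _).
  apply/eqP; rewrite eqn_leq card_out_edges_le1; apply/card_gt0P; exists e.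
  by rewrite inE tail_e eqxx andbT; apply/flow_edgesP; exists i.
apply/eqP; rewrite eqn0Ngt; apply/negP => /card_gt0P [f].
rewrite inE => /andP [/flow_edgesP [i' i'_I f_p] /eqP tail_f].
have := mem_walk_tail (walk_p i' i'_I) f_p; rewrite tail_f inE => /predU1P [/src_inj eq_i|].
  by move: i_notI; rewrite eq_i i'_I.
by case/mapP => g _ /esym /head_neq_src.
Qed.

Lemma card_in_edges_snk j : #|in_edges F (snk G j)| = (j \in J).
Proof.
case: HF => _ walk_p _ im_t; have [|j_notJ] := boolP (j \in J).
  rewrite -im_t => /imsetP [i i_I ->].
  have [e e_p head_e] := dwalk_last (walk_p i i_I) (@src_neq_snk _ _).
  apply/eqP; rewrite eqn_leq card_in_edges_le1; apply/card_gt0P; exists e.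
  by rewrite inE head_e eqxx andbT; apply/flow_edgesP; exists i.
apply/eqP; rewrite eqn0Ngt; apply/negP => /card_gt0P [f].
rewrite inE => /andP [/flow_edgesP [i i_I f_p] /eqP head_f].
case: (dwalk_head_next (walk_p i i_I) f_p) => [|[g _]]; rewrite head_f.
  by move/snk_inj => eq_j; move: j_notJ; rewrite eq_j -im_t imset_f.
by move/tail_neq_snk.
Qed.

Lemma flow_src_edge e i : e \in F -> tail e = src G i -> i \in I.
Proof.
move=> e_F tail_e; rewrite -[i \in I]lt0b -card_out_edges_src; apply/card_gt0P.
by exists e; rewrite inE e_F tail_e eqxx.
Qed.

Lemma flow_snk_edge e j : e \in F -> hd e = snk G j -> j \in J.
Proof.
move=> e_F head_e; rewrite -[j \in J]lt0b -card_in_edges_snk; apply/card_gt0P.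
by exists e; rewrite inE e_F head_e eqxx.
Qed.

Lemma flow_balance v : (forall i, v <> src G i) -> (forall j, v <> snk G j) ->
  #|in_edges F v| = #|out_edges F v|.
Proof.
case: HF => _ walk_p _ _ not_src not_snk.
have : (0 < #|in_edges F v|) = (0 < #|out_edges F v|).
  apply/card_gt0P/card_gt0P => -[e]; rewrite inE => /andP [/flow_edgesP [i i_I e_p] /eqP v_e].
    case: (dwalk_head_next (walk_p i i_I) e_p) => [|[f f_p tail_f]].
      by rewrite v_e => /not_snk.
    by exists f; rewrite inE tail_f v_e eqxx andbT; apply/flow_edgesP; exists i.
  have := mem_walk_tail (walk_p i i_I) e_p; rewrite v_e inE.
  case/predU1P => [/not_src //|/mapP [f f_p head_f]].
  by exists f; rewrite inE head_f eqxx andbT; apply/flow_edgesP; exists i.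
move: (card_in_edges_le1 v) (card_out_edges_le1 v).
by case: #|in_edges F v| => [|[|]] //; case: #|out_edges F v| => [|[|]].
Qed.

End Flow.

Section TwoFlows.
Variables (I I' : {set 'I_m}) (J J' : {set 'I_n}) (p p' : 'I_m -> seq E) (t t' : 'I_m -> 'I_n).
Hypotheses (HF : is_flow I J p t) (HF' : is_flow I' J' p' t').
Local Notation A := (flow_edges I p).
Local Notation B := (flow_edges I' p').
Local Notation U := (symdiff A B).

Lemma card_in_edges_symdiff_le2 v : #|in_edges U v| <= 2.
Proof.
rewrite in_edges_symdiff; apply: leq_trans (leq_card_symdiff _ _) _.
exact: leq_add (card_in_edges_le1 HF v) (card_in_edges_le1 HF' v).
Qed.

Lemma card_out_edges_symdiff_le2 v : #|out_edges U v| <= 2.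
Proof.
rewrite out_edges_symdiff; apply: leq_trans (leq_card_symdiff _ _) _.
exact: leq_add (card_out_edges_le1 HF v) (card_out_edges_le1 HF' v).
Qed.

(* Flow conservation at the inner vertex [tail f] yields a second phi-edge leaving it and a
   second phi'-edge entering it, and neither of them lies in the other flow. *)
Lemma degU_junction e f : e \in A :\: B -> f \in B :\: A -> hd e = tail f ->
  degU U (tail f) = 4.
Proof.
rewrite !inE => /andP [e_notB e_A] /andP [f_notA f_B] head_e.
have not_src i : tail f <> src G i by rewrite -head_e; apply: head_neq_src.
have not_snk j : tail f <> snk G j by apply: tail_neq_snk.
have [b] : exists b, b \in out_edges A (tail f).
  apply/card_gt0P; rewrite -(flow_balance HF not_src not_snk); apply/card_gt0P.
  by exists e; rewrite inE e_A head_e eqxx.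
rewrite inE => /andP [b_A /eqP tail_b].
have [a] : exists a, a \in in_edges B (tail f).
  apply/card_gt0P; rewrite (flow_balance HF' not_src not_snk); apply/card_gt0P.
  by exists f; rewrite inE f_B eqxx.
rewrite inE => /andP [a_B /eqP head_a].
have b_notB : b \notin B.
  by apply: contraNN f_notA => b_B; rewrite -(flow_tail_inj HF' b_B f_B tail_b).
have a_notA : a \notin A.
  apply: contraNN e_notB => a_A.
  by rewrite -(flow_head_inj HF a_A e_A (etrans head_a (esym head_e))).
have two_out : 1 < #|out_edges U (tail f)|.
  apply/card_gt1P; exists b, f; rewrite !inE b_A (negbTE b_notB) (negbTE f_notA) f_B.
  by rewrite tail_b eqxx; split => //; apply: contraNneq f_notA => <-.
have two_in : 1 < #|in_edges U (tail f)|.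
  apply/card_gt1P; exists e, a; rewrite !inE e_A (negbTE e_notB) (negbTE a_notA) a_B.
  by rewrite head_e head_a eqxx; split => //; apply: contraNneq a_notA => <-.
have := card_in_edges_symdiff_le2 (tail f); have := card_out_edges_symdiff_le2 (tail f).
by rewrite /degU -/(out_edges U (tail f)) -/(in_edges U (tail f)); lia.
Qed.

End TwoFlows.

Section DoubleFlow.
Variables (I I' : {set 'I_m}) (J J' : {set 'I_n}) (p p' : 'I_m -> seq E) (t t' : 'I_m -> 'I_n).
Hypotheses (HF : is_flow I J p t) (HF' : is_flow I' J' p' t').
Local Notation A := (flow_edges I p).
Local Notation B := (flow_edges I' p').
Local Notation U := (symdiff A B).
Local Notation T := (terminals I I' J J').
Local Notation Tfwd := (forward_terminals I I' J J').

Lemma ndeg_symdiff v b : ndeg U (v, b) <= 2 /\ (ndeg U (v, b) == 1) = ~~ b && (v \in T).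
Proof.
have [parity odd_T] : [|| #|in_edges U v| == 0, #|out_edges U v| == 0
                         | odd #|in_edges U v| == odd #|out_edges U v|]
                      /\ odd (#|in_edges U v| + #|out_edges U v|) = (v \in T).
  case: (vertex_cases v) => [[i ->]|[j ->]|[not_src not_snk]].
  - rewrite card_in_edges_src out_edges_symdiff odd_card_symdiff.
    by rewrite (card_out_edges_src HF) (card_out_edges_src HF') src_terminal !oddb.
  - rewrite card_out_edges_snk addn0 in_edges_symdiff odd_card_symdiff.
    by rewrite (card_in_edges_snk HF) (card_in_edges_snk HF') snk_terminal !oddb orbT.
  rewrite in_edges_symdiff out_edges_symdiff oddD !odd_card_symdiff.
  rewrite (flow_balance HF not_src not_snk) (flow_balance HF' not_src not_snk) eqxx addbb !orbT.
  by split => //; apply/esym/negP; case/setUP => /imsetP [k _]; [apply: not_src|apply: not_snk].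
have [ndeg_le2 ndeg_eq1] := ndeg_le2_eq1 b (card_in_edges_symdiff_le2 HF HF' v)
  (card_out_edges_symdiff_le2 HF HF' v) parity.
by rewrite ndeg_eq1 odd_T.
Qed.

Lemma ndeg_symdiff_le2 x : ndeg U x <= 2.
Proof. by case: x => v b; case: (ndeg_symdiff v b). Qed.

Lemma ndeg_symdiff_eq1 x : (ndeg U x == 1) = ~~ x.2 && (x.1 \in T).
Proof. by case: x => v b; case: (ndeg_symdiff v b). Qed.

Lemma symdiff_head_inj e f : e \in U -> f \in U -> e != f -> hd e = hd f ->
  (e \in A) = ~~ (f \in A).
Proof.
rewrite !mem_symdiff => e_U f_U ne_ef head_ef.
case e_A: (e \in A); case f_A: (f \in A) => //=; case/negP: ne_ef; apply/eqP.
  exact: (flow_head_inj HF) head_ef.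
by move: e_U f_U; rewrite e_A f_A => e_B f_B; apply: (flow_head_inj HF') head_ef.
Qed.

Lemma symdiff_tail_inj e f : e \in U -> f \in U -> e != f -> tail e = tail f ->
  (e \in A) = ~~ (f \in A).
Proof.
rewrite !mem_symdiff => e_U f_U ne_ef tail_ef.
case e_A: (e \in A); case f_A: (f \in A) => //=; case/negP: ne_ef; apply/eqP.
  exact: (flow_tail_inj HF) tail_ef.
by move: e_U f_U; rewrite e_A f_A => e_B f_B; apply: (flow_tail_inj HF') tail_ef.
Qed.

Lemma junction_same_side e f : e \in U -> f \in U -> hd e = tail f ->
  degU U (tail f) != 4 -> (e \in A) = (f \in A).
Proof.
rewrite !mem_symdiff => e_U f_U head_e.
case e_A: (e \in A); case f_A: (f \in A) => //; move: e_U f_U; rewrite e_A f_A /= => e_B f_B.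
  have e_AB : e \in A :\: B by rewrite inE e_A e_B.
  have f_BA : f \in B :\: A by rewrite inE f_A f_B.
  by rewrite (degU_junction HF HF' e_AB f_BA head_e).
have e_BA : e \in B :\: A by rewrite inE e_A e_B.
have f_AB : f \in A :\: B by rewrite inE f_A f_B.
by rewrite symdiffC (degU_junction HF' HF e_BA f_AB head_e).
Qed.

Lemma aligned_step ed1 ed2 : ed1.1 \in U -> ed2.1 \in U -> ed1.1 != ed2.1 ->
  step_dst U ed1 = step_src U ed2 -> aligned A ed1 = aligned A ed2.
Proof.
case: ed1 ed2 => e [] [f []] e_U f_U ne_ef; rewrite /step_dst /step_src /ends /aligned /=.
- case/esym/node_true_false => tail_f deg_f.
  by rewrite (junction_same_side e_U f_U (esym tail_f) deg_f).
- by move/node_inj/(symdiff_head_inj e_U f_U ne_ef) ->; case: (f \in A).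
- by move/node_inj/(symdiff_tail_inj e_U f_U ne_ef) ->; case: (f \in A).
- case/node_true_false => tail_e deg_e.
  by rewrite (junction_same_side f_U e_U (esym tail_e) deg_e).
Qed.

Lemma aligned_first x ed s y : uwalk U x (ed :: s) y -> x.1 \in T ->
  aligned A ed = (x.1 \in Tfwd).
Proof.
case/uwalk_cons => + <- _; case: ed => e [] e_U; rewrite /step_src /ends /aligned /= node_fst.
  case/setUP => /imsetP [i i_T tail_e]; last by case: (tail_neq_snk tail_e).
  rewrite tail_e src_forward; move: e_U i_T; rewrite mem_symdiff !inE.
  case e_A: (e \in A) => /=; [move=> _|move=> e_B].
    by rewrite (flow_src_edge HF e_A tail_e); case: (i \in I').
  by rewrite (flow_src_edge HF' e_B tail_e).
case/setUP => /imsetP [j j_T head_e]; first by case: (head_neq_src head_e).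
rewrite head_e snk_forward; move: e_U j_T; rewrite mem_symdiff !inE.
case e_A: (e \in A) => /=; [move=> _|move=> e_B].
  by rewrite (flow_snk_edge HF e_A head_e).
by rewrite (flow_snk_edge HF' e_B head_e) /= !andbT => ->.
Qed.

Lemma exch_trav_aligned x s y : exch_trav U x s y ->
  {in s, forall ed, aligned A ed = (x.1 \in Tfwd)}.
Proof.
case=> + + uniq_s /eqP deg_x _; case: s uniq_s => [|ed s] uniq_s walk_s // _ ed' ed'_s.
move: deg_x; rewrite ndeg_symdiff_eq1 => /andP [_ x_T].
by rewrite (uwalk_const aligned_step walk_s uniq_s ed'_s) (aligned_first walk_s x_T).
Qed.

Lemma exch_trav_endpoints v :
  (exists x s y, exch_trav U x s y /\ (v = x.1 \/ v = y.1)) <-> v \in T.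
Proof.
split => [[x [s [y [[_ _ _ /eqP deg_x /eqP deg_y] [->|->]]]]]|v_T].
- by move: deg_x; rewrite ndeg_symdiff_eq1 => /andP [].
- by move: deg_y; rewrite ndeg_symdiff_eq1 => /andP [].
have /eqP deg_v : ndeg U (v, false) == 1 by rewrite ndeg_symdiff_eq1.
have [s [y trav]] := exch_trav_exists ndeg_symdiff_le2 deg_v.
by exists (v, false), s, y; split; [|left].
Qed.

Lemma exch_trav_connects x s y : exch_trav U x s y ->
  [\/ connects x.1 y.1 (Rset G (I :\: I')) (Rset G (I' :\: I)),
      connects x.1 y.1 (Cset G (J :\: J')) (Cset G (J' :\: J)),
      connects x.1 y.1 (Rset G (I :\: I')) (Cset G (J :\: J')) |
      connects x.1 y.1 (Rset G (I' :\: I)) (Cset G (J' :\: J))].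
Proof.
move=> trav; have [_ s_nil _ /eqP deg_x /eqP deg_y] := trav.
have [ed ed_s] : exists ed, ed \in s.
  by case: s s_nil {trav} => [|ed s] //; exists ed; rewrite mem_head.
have ed_rev : (ed.1, ~~ ed.2) \in rev_steps s.
  by rewrite mem_rev (map_f (fun ed => (ed.1, ~~ ed.2))).
have opposite : (x.1 \in Tfwd) = ~~ (y.1 \in Tfwd).
  rewrite -(exch_trav_aligned trav ed_s) -(exch_trav_aligned (exch_trav_rev trav) ed_rev).
  by rewrite aligned_flip negbK.
have termE : T = (Rset G (I :\: I') :|: Rset G (I' :\: I))
                  :|: (Cset G (J :\: J') :|: Cset G (J' :\: J)).
  by rewrite /terminals /Rset /Cset !imsetU.
move: deg_x deg_y; rewrite !ndeg_symdiff_eq1 termE => /andP [_ x_T] /andP [_ y_T].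
exact: connects_opposite x_T y_T opposite.
Qed.

Lemma exch_trav_directions x s y : exch_trav U x s y ->
  (forall ed, ed \in s -> (ed.1 \in A -> ed.2) /\ (ed.1 \in B -> ~~ ed.2)) \/
  (forall ed, ed \in s -> (ed.1 \in A -> ~~ ed.2) /\ (ed.1 \in B -> ed.2)).
Proof.
move=> trav; have [walk_s _ _ _ _] := trav; have aligned_s := exch_trav_aligned trav.
have side ed : ed \in s -> (ed.1 \in A) = ~~ (ed.1 \in B).
  move=> ed_s; have := uwalk_subset walk_s (map_f fst ed_s).
  by rewrite mem_symdiff; case: (_ \in A); case: (_ \in B).
have [x_fwd|/negbTE x_fwd] := boolP (x.1 \in Tfwd); [left|right] => ed ed_s;
  have := aligned_s ed ed_s; rewrite x_fwd /aligned (side ed ed_s);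
  by case: (ed.2); case: (ed.1 \in B).
Qed.

Lemma card_ndeg_symdiff_eq1 : #|[set z | ndeg U z == 1]| = #|T|.
Proof.
have inj_false : injective (fun v : V => (v, false)) by move=> u w [].
rewrite -(card_imset T inj_false); apply: eq_card => -[v b].
rewrite inE ndeg_symdiff_eq1 /=; apply/idP/imsetP => [/andP [b_false v_T]|[w w_T [-> ->]]] //.
by exists v; move: b_false; case: b.
Qed.

Lemma exch_paths_count Ps : uniq Ps -> (forall P, P \in Ps <-> exch_path U P) ->
  2 * size Ps = #|I :\: I'| + #|I' :\: I| + #|J :\: J'| + #|J' :\: J|.
Proof.
move=> uniq_Ps mem_Ps; rewrite (count_exch_paths ndeg_symdiff_le2 uniq_Ps mem_Ps).
by rewrite card_ndeg_symdiff_eq1 card_terminals.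
Qed.

End DoubleFlow.

End SEGraph.

End Graph.

Theorem lemma4p1 (R : realFieldType) (m n : nat) (G : sedata R m n)
    (I I' : {set 'I_m}) (J J' : {set 'I_n})
    (p p' : 'I_m -> seq (edge G)) (t t' : 'I_m -> 'I_n) :
  is_SEgraph G ->
  is_flow I J p t -> is_flow I' J' p' t' ->
  let Ep := flow_edges I p in
  let Ep' := flow_edges I' p' in
  let U := symdiff Ep Ep' in
  [/\ (* (i) *)
      exists Ps : seq {set edge G},
        [/\ uniq Ps, forall P, P \in Ps <-> exch_path U P &
            (2 * size Ps = #|I :\: I'| + #|I' :\: I| + #|J :\: J'| + #|J' :\: J|)%N],
      (* (ii) set of endvertices *)
      forall v : vert G,
        (exists x s y, exch_trav U x s y /\ (v = x.1 \/ v = y.1)) <->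
        v \in Rset G ((I :\: I') :|: (I' :\: I)) :|: Cset G ((J :\: J') :|: (J' :\: J)),
      (* (ii) types of connections *)
      forall x s y, exch_trav U x s y ->
        [\/ connects x.1 y.1 (Rset G (I :\: I')) (Rset G (I' :\: I)),
            connects x.1 y.1 (Cset G (J :\: J')) (Cset G (J' :\: J)),
            connects x.1 y.1 (Rset G (I :\: I')) (Cset G (J :\: J')) |
            connects x.1 y.1 (Rset G (I' :\: I)) (Cset G (J' :\: J))] &
      (* (iii) opposite directions of phi- and phi'-edges *)
      forall x s y, exch_trav U x s y ->
        (forall ed, ed \in s -> (ed.1 \in Ep -> ed.2) /\ (ed.1 \in Ep' -> ~~ ed.2)) \/
        (forall ed, ed \in s -> (ed.1 \in Ep -> ~~ ed.2) /\ (ed.1 \in Ep' -> ed.2))].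
Proof.
move=> HG HF HF' Ep Ep' U; split.
- have [Ps [uniq_Ps mem_Ps]] := exists_enum_pred (exch_path U).
  by exists Ps; split => //; apply: (exch_paths_count HG HF HF').
- exact: (exch_trav_endpoints HG HF HF').
- exact: (exch_trav_connects HG HF HF').
- exact: (exch_trav_directions HG HF HF').
Qed.
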